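(* There exists a large set with multiplicity LS$(3,4,14;720)$.
   Context: A Steiner system S$(t,k,n)$ is a pair $(Q,B)$ where $Q$ is an $n$-set and $B$ is a collection of $k$-subsets (blocks) of $Q$ such that every $t$-subset of $Q$ is contained in exactly one block. A large set with multiplicity $\mu$, LS$(t,k,n;\mu)$, is a family (the same system may occur more than once) of Steiner systems S$(t,k,n)$ on a common $n$-set $Q$ such that every $k$-subset of $Q$ is a block of exactly $\mu$ of the systems. *)

From mathcomp Require Import all_boot.
Unset Printing Implicit Defensive.

Definition steiner_system (t k n : nat) (B : {set {set 'I_n}}) : Prop :=
  (forall b, b \in B -> #|b| = k) /\
  (forall T : {set 'I_n}, #|T| = t -> #|[set b in B | T \subset b]| = 1).

(* A large set with multiplicity mu, LS(t,k,n;mu): a family (a list, so the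
   same system may occur several times) of Steiner systems S(t,k,n) on the
   common n-set 'I_n such that every k-subset is a block of exactly mu of
   the systems (counted with multiplicity). *)
Definition large_set (t k n mu : nat) (F : seq {set {set 'I_n}}) : Prop :=
  (forall B, B \in F -> steiner_system t k n B) /\
  (forall K : {set 'I_n}, #|K| = k -> count (fun B : {set {set 'I_n}} => K \in B) F = mu).

From mathcomp Require Import all_boot.
From Corelib Require Import BinNums.
From Stdlib Require FMapPositive.

Set Implicit Arguments.
Unset Strict Implicit.
Unset Printing Implicit Defensive.

(* The systems are the images g(B) of one Steiner quadruple system B on
   {0, ..., 13} under the 7920 permutations g = t \o h with h in
   [m11_pair_stabilizer] and t in [m11_transversal].  These form the Mathieu
   group M11, acting sharply 4-transitively on {0, ..., 10} and fixing 11, 12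
   and 13, so the orbit of a 4-set K is determined by K :&: {11, 12, 13}.
   Counting blocks of an S(3,4,14) through the points 11, 12, 13 shows that
   every orbit of size N contains exactly N / 11 blocks of B, hence every 4-set
   lies in 7920 / 11 = 720 of the systems.
   The count is checked by computation: K lies in t(h(B)) iff t^-1(K) lies in
   h(B), so it suffices to tabulate the blocks of the 144 systems h(B) once and
   to look up the 55 preimages t^-1(K) of each 4-set K. *)

Lemma count_allpairs (S T U : Type) (a : pred U) (f : S -> T -> U) s t :
  count a [seq f x y | x <- s, y <- t] =
  sumn [seq count (fun y => a (f x y)) t | x <- s].
Proof. by elim: s => //= x s IHs; rewrite count_cat count_map IHs. Qed.

Lemma card_uniq_filter (T : finType) (s : seq T) (P : pred T) :
  uniq s -> #|[set x in s | P x]| = count P s.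
Proof.
move=> s_uniq; rewrite -size_filter -(card_uniqP (filter_uniq P s_uniq)).
by apply: eq_card => x; rewrite inE mem_filter andbC.
Qed.

Lemma all2_map (S T : Type) (r : rel T) (f g : S -> T) (s : seq S) :
  all2 r (map f s) (map g s) = all (fun x => r (f x) (g x)) s.
Proof. by elim: s => //= x s ->. Qed.

Section ImageSystem.

Variables (n : nat) (f : 'I_n -> 'I_n).
Hypothesis f_inj : injective f.
Implicit Types (X Y : {set 'I_n}) (B : {set {set 'I_n}}).

Definition image_system B : {set {set 'I_n}} := [set f @: X | X : {set 'I_n} in B].

Lemma preimsetK : cancel (fun Y => f @^-1: Y) (fun X => f @: X).
Proof.
have [g _ gK] := injF_bij f_inj.
move=> Y; apply/setP=> y; apply/imsetP/idP => [[x + ->] | Yy].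
  by rewrite inE.
by exists (g y); rewrite ?inE gK.
Qed.

Lemma preimset_subset X Y : (f @^-1: X \subset f @^-1: Y) = (X \subset Y).
Proof.
apply/idP/idP => [/(imsetS f) | /preimsetS //].
by rewrite !preimsetK.
Qed.

Lemma mem_image_system B Y : (Y \in image_system B) = (f @^-1: Y \in B).
Proof. by rewrite -{1}[Y]preimsetK mem_imset //; apply: imset_inj. Qed.

Lemma image_system_seq (s : seq {set 'I_n}) :
  image_system [set X in s] = [set Y in map (fun X => f @: X) s].
Proof.
apply/setP=> Y; rewrite inE.
by apply/imsetP/mapP => -[X]; rewrite ?inE => Xs ->; exists X; rewrite ?inE.
Qed.

Lemma steiner_system_image t k B :
  steiner_system t k n B -> steiner_system t k n (image_system B).
Proof.
move=> [cardB coverB]; split=> [_ /imsetP[X XB ->] | T cardT].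
  by rewrite card_imset // cardB.
have -> : [set Y in image_system B | T \subset Y] =
          image_system [set X in B | f @^-1: T \subset X].
  by apply/setP=> Y; rewrite !inE !mem_image_system inE preimset_subset.
by rewrite card_imset ?coverB ?card_preimset //; apply: imset_inj.
Qed.

End ImageSystem.

Section BitVectors.

Variable n : nat.
Implicit Types (A C : {set 'I_n}) (s : seq nat) (v w : seq bool).

Definition bits A : seq bool := [seq i \in A | i <- enum 'I_n].
Definition seq_bits s : seq bool := [seq i \in s | i <- iota 0 n].
Definition set_of_seq s : {set 'I_n} := [set i : 'I_n | val i \in s].
Definition subbits v w := all2 implb v w.

Fixpoint bitseqs m : seq (seq bool) :=
  if m is m'.+1 then [seq b :: v | b <- [:: true; false], v <- bitseqs m']
  else [:: [::]].

Definition weight_bitseqs k := [seq v <- bitseqs n | count id v == k].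

Lemma size_bits A : size (bits A) = n.
Proof. by rewrite size_map size_enum_ord. Qed.

Lemma nth_bits A (i : 'I_n) : nth false (bits A) i = (i \in A).
Proof. by rewrite (nth_map i) ?size_enum_ord // nth_ord_enum. Qed.

Lemma bits_inj : injective bits.
Proof. by move=> A C eqAC; apply/setP=> i; rewrite -!nth_bits eqAC. Qed.

Lemma count_bits A : count id (bits A) = #|A|.
Proof. by rewrite count_map -sum1_count big_enum_cond sum1_card. Qed.

Lemma subset_bits A C : (A \subset C) = subbits (bits A) (bits C).
Proof.
rewrite /subbits all2_map; apply/subsetP/allP => [AC i _ | AC i Ai].
  by apply/implyP/AC.
exact: implyP (AC i (mem_enum _ i)) Ai.
Qed.

Lemma bits_set_of_seq s : bits (set_of_seq s) = seq_bits s.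
Proof.
rewrite /seq_bits -val_enum_ord -map_comp.
by apply: eq_map => i; rewrite /= inE.
Qed.

Lemma mem_bitseqs v : v \in bitseqs (size v).
Proof.
elim: v => [|b v IHv] //.
by apply: (allpairs_f (fun b v => b :: v)) => //; case: b.
Qed.

Lemma bits_weight A : bits A \in weight_bitseqs #|A|.
Proof.
by rewrite mem_filter count_bits eqxx -[X in bitseqs X](size_bits A) mem_bitseqs.
Qed.

Section SeqFun.

Variable h : seq nat.
Hypothesis h_perm : perm_eq h (iota 0 n).

Definition seq_fun (i : 'I_n) : 'I_n := insubd i (nth 0 h i).

Lemma size_perm_iota : size h = n.
Proof. by rewrite (perm_size h_perm) size_iota. Qed.

Lemma nth_perm_iota_lt i : i < n -> nth 0 h i < n.
Proof.
move=> lt_i_n; have : nth 0 h i \in h by rewrite mem_nth ?size_perm_iota.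
by rewrite (perm_mem h_perm) mem_iota.
Qed.

Lemma val_seq_fun i : val (seq_fun i) = nth 0 h i.
Proof. by rewrite val_insubd nth_perm_iota_lt. Qed.

Lemma seq_fun_inj : injective seq_fun.
Proof.
move=> i j /(congr1 val); rewrite !val_seq_fun => /eqP.
by rewrite nth_uniq ?size_perm_iota ?(perm_uniq h_perm) ?iota_uniq // => /eqP/val_inj.
Qed.

Lemma imset_seq_fun s : all (fun x => x < n) s ->
  seq_fun @: set_of_seq s = set_of_seq (map (nth 0 h) s).
Proof.
move=> /allP s_lt; apply/setP=> j; rewrite inE.
apply/imsetP/mapP => [[i] | [x xs j_eq]].
  by rewrite inE => i_s ->; exists (val i); rewrite ?val_seq_fun.
exists (Ordinal (s_lt x xs)); first by rewrite inE.
by apply: val_inj; rewrite val_seq_fun.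
Qed.

Lemma bits_preimset A : bits (seq_fun @^-1: A) = map (nth false (bits A)) h.
Proof.
apply: (@eq_from_nth _ false) => [|i].
  by rewrite size_bits size_map size_perm_iota.
rewrite size_bits => lt_i_n; rewrite (nth_map 0) ?size_perm_iota //.
by rewrite -[i]/(val (Ordinal lt_i_n)) nth_bits inE -val_seq_fun nth_bits.
Qed.

End SeqFun.

End BitVectors.

Module PM := FMapPositive.PositiveMap.

Fixpoint pos_of_bits (v : seq bool) : positive :=
  if v is b :: v' then (if b then xI else xO) (pos_of_bits v') else xH.

Lemma pos_of_bits_inj : injective pos_of_bits.
Proof. by elim=> [|[] v IHv] [|[] w] //= [/IHv ->]. Qed.

Definition lookup (m : PM.t nat) (v : seq bool) : nat :=
  odflt 0 (PM.find (pos_of_bits v) m).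

Definition insert (m : PM.t nat) (v : seq bool) : PM.t nat :=
  PM.add (pos_of_bits v) (lookup m v).+1 m.

Definition tabulate (vs : seq (seq bool)) : PM.t nat :=
  foldl insert (PM.empty nat) vs.

Lemma lookup_insert m v w : lookup (insert m w) v = lookup m v + (w == v).
Proof.
rewrite /lookup /insert; have [<- | neq_wv] := eqVneq w v.
  by rewrite PM.gss addn1.
by rewrite PM.gso ?addn0 // => /pos_of_bits_inj eq_vw; rewrite eq_vw eqxx in neq_wv.
Qed.

Lemma lookup_tabulate vs v : lookup (tabulate vs) v = count_mem v vs.
Proof.
have lookup_foldl m : lookup (foldl insert m vs) v = lookup m v + count_mem v vs.
  by elim: vs m => [|w vs IHvs] m /=; rewrite ?addn0 // IHvs lookup_insert addnA.
by rewrite lookup_foldl /lookup PM.gempty.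
Qed.

Definition sqs14_blocks : seq (seq nat) := [::
  [:: 0; 1; 2; 3]; [:: 0; 1; 4; 5]; [:: 0; 1; 6; 7]; [:: 0; 1; 8; 9];
  [:: 0; 1; 10; 11]; [:: 0; 1; 12; 13]; [:: 0; 2; 4; 6]; [:: 0; 2; 5; 8];
  [:: 0; 2; 7; 10]; [:: 0; 2; 9; 12]; [:: 0; 2; 11; 13]; [:: 0; 3; 4; 9];
  [:: 0; 4; 8; 10]; [:: 0; 4; 7; 13]; [:: 0; 4; 11; 12]; [:: 0; 5; 7; 9];
  [:: 0; 6; 9; 11]; [:: 0; 3; 5; 11]; [:: 0; 7; 8; 11]; [:: 0; 3; 7; 12];
  [:: 0; 6; 8; 12]; [:: 0; 3; 8; 13]; [:: 0; 3; 6; 10]; [:: 0; 5; 6; 13];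
  [:: 0; 5; 10; 12]; [:: 0; 9; 10; 13]; [:: 1; 2; 4; 8]; [:: 1; 2; 5; 7];
  [:: 1; 2; 6; 11]; [:: 1; 2; 10; 12]; [:: 1; 2; 9; 13]; [:: 1; 4; 11; 13];
  [:: 1; 5; 8; 11]; [:: 1; 5; 10; 13]; [:: 1; 3; 7; 13]; [:: 1; 6; 8; 13];
  [:: 1; 3; 8; 10]; [:: 1; 7; 8; 12]; [:: 1; 7; 9; 11]; [:: 1; 3; 11; 12];
  [:: 1; 3; 4; 6]; [:: 1; 3; 5; 9]; [:: 1; 4; 7; 10]; [:: 1; 4; 9; 12];
  [:: 1; 5; 6; 12]; [:: 1; 6; 9; 10]; [:: 2; 5; 6; 9]; [:: 2; 6; 8; 10];
  [:: 2; 7; 8; 13]; [:: 2; 6; 7; 12]; [:: 2; 3; 6; 13]; [:: 2; 4; 10; 13];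
  [:: 2; 5; 12; 13]; [:: 2; 3; 4; 12]; [:: 2; 3; 5; 10]; [:: 2; 4; 5; 11];
  [:: 2; 4; 7; 9]; [:: 2; 3; 7; 11]; [:: 2; 3; 8; 9]; [:: 2; 8; 11; 12];
  [:: 2; 9; 10; 11]; [:: 3; 4; 10; 11]; [:: 3; 4; 5; 13]; [:: 3; 4; 7; 8];
  [:: 3; 5; 6; 7]; [:: 3; 5; 8; 12]; [:: 3; 6; 8; 11]; [:: 3; 6; 9; 12];
  [:: 3; 7; 9; 10]; [:: 3; 9; 11; 13]; [:: 3; 10; 12; 13]; [:: 4; 5; 7; 12];
  [:: 4; 6; 7; 11]; [:: 4; 8; 9; 11]; [:: 4; 5; 6; 8]; [:: 4; 5; 9; 10];
  [:: 4; 6; 9; 13]; [:: 4; 6; 10; 12]; [:: 4; 8; 12; 13]; [:: 5; 6; 10; 11];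
  [:: 5; 7; 8; 10]; [:: 5; 7; 11; 13]; [:: 5; 8; 9; 13]; [:: 5; 9; 11; 12];
  [:: 6; 7; 8; 9]; [:: 6; 7; 10; 13]; [:: 6; 11; 12; 13]; [:: 7; 9; 12; 13];
  [:: 7; 10; 11; 12]; [:: 8; 9; 10; 12]; [:: 8; 10; 11; 13]].

(* Permutations g of {0, ..., 13} are encoded by their image lists
   [:: g 0; ...; g 13].  [m11_pair_stabilizer] is the stabilizer of {0, 1} in
   M11, and [m11_transversal] contains one permutation of M11 for each image of
   {0, 1}. *)
Definition m11_pair_stabilizer : seq (seq nat) := [::
  [:: 0; 1; 2; 3; 4; 5; 6; 7; 8; 9; 10; 11; 12; 13]; [:: 0; 1; 2; 4; 9; 8; 10; 3; 6; 7; 5; 11; 12; 13];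
  [:: 0; 1; 2; 5; 10; 9; 3; 8; 4; 6; 7; 11; 12; 13]; [:: 0; 1; 2; 6; 8; 3; 9; 10; 7; 5; 4; 11; 12; 13];
  [:: 0; 1; 2; 7; 3; 10; 8; 9; 5; 4; 6; 11; 12; 13]; [:: 0; 1; 2; 8; 5; 7; 4; 6; 9; 10; 3; 11; 12; 13];
  [:: 0; 1; 2; 9; 7; 6; 5; 4; 10; 3; 8; 11; 12; 13]; [:: 0; 1; 2; 10; 6; 4; 7; 5; 3; 8; 9; 11; 12; 13];
  [:: 0; 1; 3; 2; 6; 8; 4; 10; 5; 9; 7; 11; 12; 13]; [:: 0; 1; 3; 4; 5; 2; 9; 7; 10; 8; 6; 11; 12; 13];
  [:: 0; 1; 3; 5; 8; 10; 6; 4; 9; 7; 2; 11; 12; 13]; [:: 0; 1; 3; 6; 9; 5; 7; 2; 4; 10; 8; 11; 12; 13];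
  [:: 0; 1; 3; 7; 4; 6; 10; 8; 2; 5; 9; 11; 12; 13]; [:: 0; 1; 3; 8; 7; 9; 2; 5; 6; 4; 10; 11; 12; 13];
  [:: 0; 1; 3; 9; 10; 4; 8; 6; 7; 2; 5; 11; 12; 13]; [:: 0; 1; 3; 10; 2; 7; 5; 9; 8; 6; 4; 11; 12; 13];
  [:: 0; 1; 4; 2; 10; 6; 9; 5; 8; 7; 3; 11; 12; 13]; [:: 0; 1; 4; 3; 9; 10; 5; 6; 2; 8; 7; 11; 12; 13];
  [:: 0; 1; 4; 5; 2; 3; 8; 7; 6; 10; 9; 11; 12; 13]; [:: 0; 1; 4; 6; 3; 7; 2; 8; 10; 9; 5; 11; 12; 13];
  [:: 0; 1; 4; 7; 5; 9; 6; 10; 3; 2; 8; 11; 12; 13]; [:: 0; 1; 4; 8; 6; 5; 10; 9; 7; 3; 2; 11; 12; 13];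
  [:: 0; 1; 4; 9; 8; 2; 7; 3; 5; 6; 10; 11; 12; 13]; [:: 0; 1; 4; 10; 7; 8; 3; 2; 9; 5; 6; 11; 12; 13];
  [:: 0; 1; 5; 2; 3; 4; 10; 7; 9; 6; 8; 11; 12; 13]; [:: 0; 1; 5; 3; 6; 9; 8; 2; 10; 7; 4; 11; 12; 13];
  [:: 0; 1; 5; 4; 8; 6; 2; 9; 3; 10; 7; 11; 12; 13]; [:: 0; 1; 5; 6; 7; 10; 4; 3; 8; 2; 9; 11; 12; 13];
  [:: 0; 1; 5; 7; 2; 8; 9; 6; 4; 3; 10; 11; 12; 13]; [:: 0; 1; 5; 8; 10; 3; 7; 4; 2; 9; 6; 11; 12; 13];
  [:: 0; 1; 5; 9; 4; 7; 3; 10; 6; 8; 2; 11; 12; 13]; [:: 0; 1; 5; 10; 9; 2; 6; 8; 7; 4; 3; 11; 12; 13];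
  [:: 0; 1; 6; 2; 9; 7; 8; 4; 3; 5; 10; 11; 12; 13]; [:: 0; 1; 6; 3; 7; 4; 9; 8; 5; 10; 2; 11; 12; 13];
  [:: 0; 1; 6; 4; 2; 10; 3; 5; 7; 9; 8; 11; 12; 13]; [:: 0; 1; 6; 5; 4; 8; 7; 9; 10; 2; 3; 11; 12; 13];
  [:: 0; 1; 6; 7; 10; 5; 2; 3; 9; 8; 4; 11; 12; 13]; [:: 0; 1; 6; 8; 3; 2; 5; 10; 4; 7; 9; 11; 12; 13];
  [:: 0; 1; 6; 9; 5; 3; 10; 2; 8; 4; 7; 11; 12; 13]; [:: 0; 1; 6; 10; 8; 9; 4; 7; 2; 3; 5; 11; 12; 13];
  [:: 0; 1; 7; 2; 8; 5; 3; 6; 10; 4; 9; 11; 12; 13]; [:: 0; 1; 7; 3; 10; 2; 4; 9; 6; 5; 8; 11; 12; 13];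
  [:: 0; 1; 7; 4; 6; 3; 5; 8; 9; 2; 10; 11; 12; 13]; [:: 0; 1; 7; 5; 9; 4; 2; 10; 8; 3; 6; 11; 12; 13];
  [:: 0; 1; 7; 6; 2; 9; 10; 4; 5; 8; 3; 11; 12; 13]; [:: 0; 1; 7; 8; 4; 10; 9; 2; 3; 6; 5; 11; 12; 13];
  [:: 0; 1; 7; 9; 3; 8; 6; 5; 2; 10; 4; 11; 12; 13]; [:: 0; 1; 7; 10; 5; 6; 8; 3; 4; 9; 2; 11; 12; 13];
  [:: 0; 1; 8; 2; 4; 9; 5; 3; 7; 10; 6; 11; 12; 13]; [:: 0; 1; 8; 3; 2; 6; 7; 10; 9; 4; 5; 11; 12; 13];
  [:: 0; 1; 8; 4; 10; 7; 6; 2; 5; 3; 9; 11; 12; 13]; [:: 0; 1; 8; 5; 7; 2; 10; 6; 3; 9; 4; 11; 12; 13];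
  [:: 0; 1; 8; 6; 5; 4; 3; 9; 2; 7; 10; 11; 12; 13]; [:: 0; 1; 8; 7; 9; 3; 4; 5; 10; 6; 2; 11; 12; 13];
  [:: 0; 1; 8; 9; 6; 10; 2; 7; 4; 5; 3; 11; 12; 13]; [:: 0; 1; 8; 10; 3; 5; 9; 4; 6; 2; 7; 11; 12; 13];
  [:: 0; 1; 9; 2; 5; 10; 7; 8; 6; 3; 4; 11; 12; 13]; [:: 0; 1; 9; 3; 8; 7; 10; 5; 4; 2; 6; 11; 12; 13];
  [:: 0; 1; 9; 4; 7; 5; 8; 10; 2; 6; 3; 11; 12; 13]; [:: 0; 1; 9; 5; 3; 6; 4; 2; 7; 8; 10; 11; 12; 13];
  [:: 0; 1; 9; 6; 10; 8; 5; 7; 3; 4; 2; 11; 12; 13]; [:: 0; 1; 9; 7; 6; 2; 3; 4; 8; 10; 5; 11; 12; 13];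
  [:: 0; 1; 9; 8; 2; 4; 6; 3; 10; 5; 7; 11; 12; 13]; [:: 0; 1; 9; 10; 4; 3; 2; 6; 5; 7; 8; 11; 12; 13];
  [:: 0; 1; 10; 2; 7; 3; 6; 9; 4; 8; 5; 11; 12; 13]; [:: 0; 1; 10; 3; 5; 8; 2; 4; 7; 6; 9; 11; 12; 13];
  [:: 0; 1; 10; 4; 3; 9; 7; 6; 8; 5; 2; 11; 12; 13]; [:: 0; 1; 10; 5; 6; 7; 9; 3; 2; 4; 8; 11; 12; 13];
  [:: 0; 1; 10; 6; 4; 2; 8; 5; 9; 3; 7; 11; 12; 13]; [:: 0; 1; 10; 7; 8; 4; 5; 2; 6; 9; 3; 11; 12; 13];
  [:: 0; 1; 10; 8; 9; 6; 3; 7; 5; 2; 4; 11; 12; 13]; [:: 0; 1; 10; 9; 2; 5; 4; 8; 3; 7; 6; 11; 12; 13];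
  [:: 1; 0; 2; 3; 6; 7; 4; 5; 10; 9; 8; 11; 12; 13]; [:: 1; 0; 2; 4; 10; 3; 9; 8; 5; 7; 6; 11; 12; 13];
  [:: 1; 0; 2; 5; 3; 8; 10; 9; 7; 6; 4; 11; 12; 13]; [:: 1; 0; 2; 6; 9; 10; 8; 3; 4; 5; 7; 11; 12; 13];
  [:: 1; 0; 2; 7; 8; 9; 3; 10; 6; 4; 5; 11; 12; 13]; [:: 1; 0; 2; 8; 4; 6; 5; 7; 3; 10; 9; 11; 12; 13];
  [:: 1; 0; 2; 9; 5; 4; 7; 6; 8; 3; 10; 11; 12; 13]; [:: 1; 0; 2; 10; 7; 5; 6; 4; 9; 8; 3; 11; 12; 13];
  [:: 1; 0; 3; 2; 4; 10; 6; 8; 7; 9; 5; 11; 12; 13]; [:: 1; 0; 3; 4; 9; 7; 5; 2; 6; 8; 10; 11; 12; 13];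
  [:: 1; 0; 3; 5; 6; 4; 8; 10; 2; 7; 9; 11; 12; 13]; [:: 1; 0; 3; 6; 7; 2; 9; 5; 8; 10; 4; 11; 12; 13];
  [:: 1; 0; 3; 7; 10; 8; 4; 6; 9; 5; 2; 11; 12; 13]; [:: 1; 0; 3; 8; 2; 5; 7; 9; 10; 4; 6; 11; 12; 13];
  [:: 1; 0; 3; 9; 8; 6; 10; 4; 5; 2; 7; 11; 12; 13]; [:: 1; 0; 3; 10; 5; 9; 2; 7; 4; 6; 8; 11; 12; 13];
  [:: 1; 0; 4; 2; 9; 5; 10; 6; 3; 7; 8; 11; 12; 13]; [:: 1; 0; 4; 3; 5; 6; 9; 10; 7; 8; 2; 11; 12; 13];
  [:: 1; 0; 4; 5; 8; 7; 2; 3; 9; 10; 6; 11; 12; 13]; [:: 1; 0; 4; 6; 2; 8; 3; 7; 5; 9; 10; 11; 12; 13];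
  [:: 1; 0; 4; 7; 6; 10; 5; 9; 8; 2; 3; 11; 12; 13]; [:: 1; 0; 4; 8; 10; 9; 6; 5; 2; 3; 7; 11; 12; 13];
  [:: 1; 0; 4; 9; 7; 3; 8; 2; 10; 6; 5; 11; 12; 13]; [:: 1; 0; 4; 10; 3; 2; 7; 8; 6; 5; 9; 11; 12; 13];
  [:: 1; 0; 5; 2; 10; 7; 3; 4; 8; 6; 9; 11; 12; 13]; [:: 1; 0; 5; 3; 8; 2; 6; 9; 4; 7; 10; 11; 12; 13];
  [:: 1; 0; 5; 4; 2; 9; 8; 6; 7; 10; 3; 11; 12; 13]; [:: 1; 0; 5; 6; 4; 3; 7; 10; 9; 2; 8; 11; 12; 13];
  [:: 1; 0; 5; 7; 9; 6; 2; 8; 10; 3; 4; 11; 12; 13]; [:: 1; 0; 5; 8; 7; 4; 10; 3; 6; 9; 2; 11; 12; 13];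
  [:: 1; 0; 5; 9; 3; 10; 4; 7; 2; 8; 6; 11; 12; 13]; [:: 1; 0; 5; 10; 6; 8; 9; 2; 3; 4; 7; 11; 12; 13];
  [:: 1; 0; 6; 2; 8; 4; 9; 7; 10; 5; 3; 11; 12; 13]; [:: 1; 0; 6; 3; 9; 8; 7; 4; 2; 10; 5; 11; 12; 13];
  [:: 1; 0; 6; 4; 3; 5; 2; 10; 8; 9; 7; 11; 12; 13]; [:: 1; 0; 6; 5; 7; 9; 4; 8; 3; 2; 10; 11; 12; 13];
  [:: 1; 0; 6; 7; 2; 3; 10; 5; 4; 8; 9; 11; 12; 13]; [:: 1; 0; 6; 8; 5; 10; 3; 2; 9; 7; 4; 11; 12; 13];
  [:: 1; 0; 6; 9; 10; 2; 5; 3; 7; 4; 8; 11; 12; 13]; [:: 1; 0; 6; 10; 4; 7; 8; 9; 5; 3; 2; 11; 12; 13];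
  [:: 1; 0; 7; 2; 3; 6; 8; 5; 9; 4; 10; 11; 12; 13]; [:: 1; 0; 7; 3; 4; 9; 10; 2; 8; 5; 6; 11; 12; 13];
  [:: 1; 0; 7; 4; 5; 8; 6; 3; 10; 2; 9; 11; 12; 13]; [:: 1; 0; 7; 5; 2; 10; 9; 4; 6; 3; 8; 11; 12; 13];
  [:: 1; 0; 7; 6; 10; 4; 2; 9; 3; 8; 5; 11; 12; 13]; [:: 1; 0; 7; 8; 9; 2; 4; 10; 5; 6; 3; 11; 12; 13];
  [:: 1; 0; 7; 9; 6; 5; 3; 8; 4; 10; 2; 11; 12; 13]; [:: 1; 0; 7; 10; 8; 3; 5; 6; 2; 9; 4; 11; 12; 13];
  [:: 1; 0; 8; 2; 5; 3; 4; 9; 6; 10; 7; 11; 12; 13]; [:: 1; 0; 8; 3; 7; 10; 2; 6; 5; 4; 9; 11; 12; 13];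
  [:: 1; 0; 8; 4; 6; 2; 10; 7; 9; 3; 5; 11; 12; 13]; [:: 1; 0; 8; 5; 10; 6; 7; 2; 4; 9; 3; 11; 12; 13];
  [:: 1; 0; 8; 6; 3; 9; 5; 4; 10; 7; 2; 11; 12; 13]; [:: 1; 0; 8; 7; 4; 5; 9; 3; 2; 6; 10; 11; 12; 13];
  [:: 1; 0; 8; 9; 2; 7; 6; 10; 3; 5; 4; 11; 12; 13]; [:: 1; 0; 8; 10; 9; 4; 3; 5; 7; 2; 6; 11; 12; 13];
  [:: 1; 0; 9; 2; 7; 8; 5; 10; 4; 3; 6; 11; 12; 13]; [:: 1; 0; 9; 3; 10; 5; 8; 7; 6; 2; 4; 11; 12; 13];
  [:: 1; 0; 9; 4; 8; 10; 7; 5; 3; 6; 2; 11; 12; 13]; [:: 1; 0; 9; 5; 4; 2; 3; 6; 10; 8; 7; 11; 12; 13];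
  [:: 1; 0; 9; 6; 5; 7; 10; 8; 2; 4; 3; 11; 12; 13]; [:: 1; 0; 9; 7; 3; 4; 6; 2; 5; 10; 8; 11; 12; 13];
  [:: 1; 0; 9; 8; 6; 3; 2; 4; 7; 5; 10; 11; 12; 13]; [:: 1; 0; 9; 10; 2; 6; 4; 3; 8; 7; 5; 11; 12; 13];
  [:: 1; 0; 10; 2; 6; 9; 7; 3; 5; 8; 4; 11; 12; 13]; [:: 1; 0; 10; 3; 2; 4; 5; 8; 9; 6; 7; 11; 12; 13];
  [:: 1; 0; 10; 4; 7; 6; 3; 9; 2; 5; 8; 11; 12; 13]; [:: 1; 0; 10; 5; 9; 3; 6; 7; 8; 4; 2; 11; 12; 13];
  [:: 1; 0; 10; 6; 8; 5; 4; 2; 7; 3; 9; 11; 12; 13]; [:: 1; 0; 10; 7; 5; 2; 8; 4; 3; 9; 6; 11; 12; 13];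
  [:: 1; 0; 10; 8; 3; 7; 9; 6; 4; 2; 5; 11; 12; 13]; [:: 1; 0; 10; 9; 4; 8; 2; 5; 6; 7; 3; 11; 12; 13]].

Definition m11_transversal : seq (seq nat) := [::
  [:: 0; 1; 2; 3; 4; 5; 6; 7; 8; 9; 10; 11; 12; 13]; [:: 0; 2; 1; 3; 10; 6; 5; 8; 7; 9; 4; 11; 12; 13];
  [:: 0; 3; 1; 2; 7; 4; 8; 5; 10; 9; 6; 11; 12; 13]; [:: 0; 4; 1; 2; 3; 9; 6; 8; 5; 7; 10; 11; 12; 13];
  [:: 0; 5; 1; 2; 8; 10; 4; 9; 7; 6; 3; 11; 12; 13]; [:: 0; 6; 1; 2; 10; 8; 7; 3; 4; 5; 9; 11; 12; 13];
  [:: 0; 7; 1; 2; 9; 3; 5; 10; 6; 4; 8; 11; 12; 13]; [:: 0; 8; 1; 2; 6; 5; 9; 7; 3; 10; 4; 11; 12; 13];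
  [:: 0; 9; 1; 2; 4; 7; 10; 6; 8; 3; 5; 11; 12; 13]; [:: 0; 10; 1; 2; 5; 6; 3; 4; 9; 8; 7; 11; 12; 13];
  [:: 1; 2; 0; 3; 8; 4; 7; 10; 5; 9; 6; 11; 12; 13]; [:: 1; 3; 0; 2; 5; 6; 10; 7; 8; 9; 4; 11; 12; 13];
  [:: 1; 4; 0; 2; 8; 10; 5; 3; 6; 7; 9; 11; 12; 13]; [:: 1; 5; 0; 2; 9; 3; 7; 8; 4; 6; 10; 11; 12; 13];
  [:: 1; 6; 0; 2; 3; 9; 4; 10; 7; 5; 8; 11; 12; 13]; [:: 1; 7; 0; 2; 10; 8; 6; 9; 5; 4; 3; 11; 12; 13];
  [:: 1; 8; 0; 2; 7; 4; 3; 6; 9; 10; 5; 11; 12; 13]; [:: 1; 9; 0; 2; 6; 5; 8; 4; 10; 3; 7; 11; 12; 13];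
  [:: 1; 10; 0; 2; 4; 7; 9; 5; 3; 8; 6; 11; 12; 13]; [:: 2; 3; 0; 1; 6; 5; 4; 8; 7; 9; 10; 11; 12; 13];
  [:: 2; 4; 0; 1; 10; 8; 9; 6; 3; 7; 5; 11; 12; 13]; [:: 2; 5; 0; 1; 3; 9; 10; 4; 8; 6; 7; 11; 12; 13];
  [:: 2; 6; 0; 1; 9; 3; 8; 7; 10; 5; 4; 11; 12; 13]; [:: 2; 7; 0; 1; 8; 10; 3; 5; 9; 4; 6; 11; 12; 13];
  [:: 2; 8; 0; 1; 4; 7; 5; 9; 6; 10; 3; 11; 12; 13]; [:: 2; 9; 0; 1; 5; 6; 7; 10; 4; 3; 8; 11; 12; 13];
  [:: 2; 10; 0; 1; 7; 4; 6; 3; 5; 8; 9; 11; 12; 13]; [:: 3; 4; 0; 1; 9; 2; 5; 10; 7; 8; 6; 11; 12; 13];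
  [:: 3; 5; 0; 1; 6; 10; 8; 9; 4; 7; 2; 11; 12; 13]; [:: 3; 6; 0; 1; 7; 5; 9; 4; 2; 10; 8; 11; 12; 13];
  [:: 3; 7; 0; 1; 10; 6; 4; 2; 8; 5; 9; 11; 12; 13]; [:: 3; 8; 0; 1; 2; 9; 7; 6; 5; 4; 10; 11; 12; 13];
  [:: 3; 9; 0; 1; 8; 4; 10; 7; 6; 2; 5; 11; 12; 13]; [:: 3; 10; 0; 1; 5; 7; 2; 8; 9; 6; 4; 11; 12; 13];
  [:: 4; 5; 0; 1; 8; 3; 2; 6; 7; 10; 9; 11; 12; 13]; [:: 4; 6; 0; 1; 2; 7; 3; 10; 8; 9; 5; 11; 12; 13];
  [:: 4; 7; 0; 1; 6; 9; 5; 3; 10; 2; 8; 11; 12; 13]; [:: 4; 8; 0; 1; 10; 5; 6; 7; 9; 3; 2; 11; 12; 13];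
  [:: 4; 9; 0; 1; 7; 2; 8; 5; 3; 6; 10; 11; 12; 13]; [:: 4; 10; 0; 1; 3; 8; 7; 9; 2; 5; 6; 11; 12; 13];
  [:: 5; 6; 0; 1; 4; 10; 7; 8; 3; 2; 9; 11; 12; 13]; [:: 5; 7; 0; 1; 9; 8; 2; 4; 6; 3; 10; 11; 12; 13];
  [:: 5; 8; 0; 1; 7; 3; 10; 2; 4; 9; 6; 11; 12; 13]; [:: 5; 9; 0; 1; 3; 7; 4; 6; 10; 8; 2; 11; 12; 13];
  [:: 5; 10; 0; 1; 6; 2; 9; 7; 8; 4; 3; 11; 12; 13]; [:: 6; 7; 0; 1; 2; 5; 10; 9; 3; 8; 4; 11; 12; 13];
  [:: 6; 8; 0; 1; 5; 2; 3; 4; 10; 7; 9; 11; 12; 13]; [:: 6; 9; 0; 1; 10; 3; 5; 8; 2; 4; 7; 11; 12; 13];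
  [:: 6; 10; 0; 1; 4; 9; 8; 2; 7; 3; 5; 11; 12; 13]; [:: 7; 8; 0; 1; 9; 10; 4; 3; 2; 6; 5; 11; 12; 13];
  [:: 7; 9; 0; 1; 6; 8; 3; 2; 5; 10; 4; 11; 12; 13]; [:: 7; 10; 0; 1; 8; 6; 5; 4; 3; 9; 2; 11; 12; 13];
  [:: 8; 9; 0; 1; 2; 10; 6; 4; 7; 5; 3; 11; 12; 13]; [:: 8; 10; 0; 1; 9; 5; 3; 6; 4; 2; 7; 11; 12; 13];
  [:: 9; 10; 0; 1; 2; 3; 4; 5; 6; 7; 8; 11; 12; 13]].

Definition sqs14_sets : seq {set 'I_14} := map (set_of_seq 14) sqs14_blocks.
Definition sqs14 : {set {set 'I_14}} := [set X in sqs14_sets].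

Definition m11_family : seq {set {set 'I_14}} :=
  [seq image_system (seq_fun t) (image_system (seq_fun h) sqs14)
     | t <- m11_transversal, h <- m11_pair_stabilizer].

Definition stabilizer_image_bits : seq (seq bool) :=
  [seq seq_bits 14 (map (nth 0 h) b) | h <- m11_pair_stabilizer, b <- sqs14_blocks].

Definition multiplicity_720 (table : PM.t nat) : bool :=
  all (fun w =>
         sumn [seq lookup table (map (nth false w) t) | t <- m11_transversal] == 720)
      (weight_bitseqs 14 4).

Lemma sqs14_blocks_valid :
  all (fun b => all (fun x => x < 14) b && (count id (seq_bits 14 b) == 4))
      sqs14_blocks.
Proof. by vm_compute. Qed.

Lemma uniq_sqs14_bits : uniq (map (seq_bits 14) sqs14_blocks).
Proof. by vm_compute. Qed.

Lemma sqs14_triples :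
  all (fun v => count (fun b => subbits v (seq_bits 14 b)) sqs14_blocks == 1)
      (weight_bitseqs 14 3).
Proof. by vm_compute. Qed.

Lemma m11_pair_stabilizer_perm : all (perm_eq^~ (iota 0 14)) m11_pair_stabilizer.
Proof. by vm_compute. Qed.

Lemma m11_transversal_perm : all (perm_eq^~ (iota 0 14)) m11_transversal.
Proof. by vm_compute. Qed.

Lemma m11_multiplicity : multiplicity_720 (tabulate stabilizer_image_bits).
Proof. by vm_compute. Qed.

Lemma uniq_sqs14_sets : uniq sqs14_sets.
Proof.
apply: (@map_uniq _ _ (@bits 14)); rewrite -map_comp (eq_map (@bits_set_of_seq 14)).
exact: uniq_sqs14_bits.
Qed.

Lemma sqs14_steiner : steiner_system 3 4 14 sqs14.
Proof.
split=> [X | T cardT].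
  rewrite inE => /mapP[b bB ->]; rewrite -count_bits bits_set_of_seq.
  by have /andP[_ /eqP] := allP sqs14_blocks_valid b bB.
have -> : [set X in sqs14 | T \subset X] = [set X in sqs14_sets | T \subset X].
  by apply/setP=> X; rewrite !in_set.
rewrite card_uniq_filter ?uniq_sqs14_sets // count_map.
rewrite (eq_count (a2 := fun b => subbits (bits T) (seq_bits 14 b))) => [|b /=].
  by apply/eqP/(allP sqs14_triples); have := bits_weight T; rewrite cardT.
by rewrite subset_bits bits_set_of_seq.
Qed.

Lemma mem_image_sqs14 h X : perm_eq h (iota 0 14) ->
  (X \in image_system (seq_fun h) sqs14) =
  count (fun b => seq_bits 14 (map (nth 0 h) b) == bits X) sqs14_blocks :> nat.
Proof.
move=> h_perm.
have imB : map (fun X : {set 'I_14} => seq_fun h @: X) sqs14_sets =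
           [seq set_of_seq 14 (map (nth 0 h) b) | b <- sqs14_blocks].
  rewrite -map_comp; apply/eq_in_map => b bB /=; rewrite imset_seq_fun //.
  by case/andP: (allP sqs14_blocks_valid b bB).
rewrite image_system_seq inE imB -count_uniq_mem; last first.
  by rewrite -imB map_inj_uniq ?uniq_sqs14_sets //; apply/imset_inj/seq_fun_inj.
rewrite count_map; apply/eq_count => b /=.
by rewrite -bits_set_of_seq (inj_eq (@bits_inj 14)).
Qed.

Lemma count_stabilizer_images X :
  count (fun h => X \in image_system (seq_fun h) sqs14) m11_pair_stabilizer =
  count_mem (bits X) stabilizer_image_bits.
Proof.
rewrite -sumn_count count_allpairs; congr sumn; apply/eq_in_map => h hH.
by rewrite mem_image_sqs14 //; apply: (allP m11_pair_stabilizer_perm).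
Qed.

Theorem corollary21 : exists F : seq {set {set 'I_14}}, large_set 3 4 14 720 F.
Proof.
exists m11_family; split=> [_ /allpairsP[[t h] [/= tT hH ->]] | K cardK].
  have t_perm := allP m11_transversal_perm t tT.
  have h_perm := allP m11_pair_stabilizer_perm h hH.
  by do 2![apply: steiner_system_image; first exact: seq_fun_inj]; exact: sqs14_steiner.
move: (bits_weight K); rewrite cardK => /(allP m11_multiplicity)/eqP <-.
rewrite count_allpairs; congr sumn; apply/eq_in_map => t tT.
have t_perm := allP m11_transversal_perm t tT.
rewrite lookup_tabulate -bits_preimset // -count_stabilizer_images.
by apply: eq_count => h; rewrite /= mem_image_system //; exact: seq_fun_inj.
Qed.
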